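(* Let $\lambda,\mathfrak{g}_s,\alpha,\Sigma,Z_1(T)$ and $\bar W(X)=(X-\alpha)\sqrt{(X+\alpha)^2-2\mathfrak{g}_s/\alpha}$ be as below. For $X>\alpha$ let $Z_{1,X}(T)=Z_1\big(T+Z_1^{-1}(X)\big)$ for $T\ge0$, where $Z_1^{-1}$ is the inverse of the strictly decreasing bijection $Z_1:(0,\infty)\to(\alpha,\infty)$, and for $Y>0$ define $$G(X,Y;T)=\frac{Z_{1,X}'(T)}{Z_{1,X}'(0)}\cdot\frac{1}{Y+Z_{1,X}(T)}.$$ Then $G(X,Y;0)=\frac{1}{X+Y}$, $G$ satisfies $$\frac{\partial}{\partial T}G(X,Y;T)=-\frac{\partial}{\partial X}\Big(\bar W(X)\,G(X,Y;T)\Big),$$ and $$\lim_{Y\to\infty}Y\int_0^\infty G(X,Y;T)\,dT=\frac{\alpha-X}{Z_1'(Z_1^{-1}(X))}=\frac{1}{\sqrt{(X+\alpha)^2-2\mathfrak{g}_s/\alpha}}.$$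
   Context: Standing assumptions: $\lambda,\mathfrak{g}_s>0$, $\alpha$ is a positive real root of $\alpha^3-\lambda\alpha+\mathfrak{g}_s=0$ with $2\alpha^3>\mathfrak{g}_s$, $\Sigma=\tfrac12\sqrt{4\alpha^2-2\mathfrak{g}_s/\alpha}>0$, and $Z_1(T)=\alpha+\dfrac{\Sigma^2}{\sinh(\Sigma T)[\Sigma\cosh(\Sigma T)+\alpha\sinh(\Sigma T)]}$ for $T>0$. Primes denote derivatives in $T$. $G$ is the continuum loop propagator of generalized CDT and the limit is the (marked) cap function. *)

From Stdlib Require Import Reals Lra ClassicalEpsilon.
Open Scope R_scope.

Definition Sigma (gs alpha : R) : R := / 2 * sqrt (4 * alpha ^ 2 - 2 * gs / alpha).

Definition Z1 (gs alpha : R) (T : R) : R :=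
  let S := Sigma gs alpha in
  alpha + S ^ 2 / (sinh (S * T) * (S * cosh (S * T) + alpha * sinh (S * T))).

(* Z_1^{-1}(X): the (unique) T > 0 with Z_1(T) = X (chosen by Hilbert epsilon;
   existence/uniqueness for X > alpha is part of what must be proved). *)
Definition Z1inv (gs alpha : R) (X : R) : R :=
  epsilon (inhabits 0) (fun T => 0 < T /\ Z1 gs alpha T = X).

Definition Z1X (gs alpha X T : R) : R := Z1 gs alpha (T + Z1inv gs alpha X).

(* G(X,Y;T), with dZ1 standing for the derivative Z_1' (so Z_{1,X}'(T) = dZ1 (T + Z_1^{-1}(X))). *)
Definition Gprop (gs alpha : R) (dZ1 : R -> R) (X Y T : R) : R :=
  dZ1 (T + Z1inv gs alpha X) / dZ1 (Z1inv gs alpha X) * / (Y + Z1X gs alpha X T).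

Definition Wbar (gs alpha X : R) : R :=
  (X - alpha) * sqrt ((X + alpha) ^ 2 - 2 * gs / alpha).

Definition improper_int_0_infty (f : R -> R) (L : R) : Prop :=
  (forall b, 0 <= b -> exists pr : Riemann_integrable f 0 b, True) /\
  (forall eps, 0 < eps -> exists M, forall b (pr : Riemann_integrable f 0 b),
       M <= b -> Rabs (RiemannInt pr - L) < eps).

Definition lim_infty (h : R -> R) (L : R) : Prop :=
  forall eps, 0 < eps -> exists M, forall Y, M < Y -> Rabs (h Y - L) < eps.

From Stdlib Require Import Reals Lra Psatz Ranalysis5 Rpower ClassicalEpsilon.
From Coquelicot Require Import Coquelicot.
Open Scope R_scope.

(* The whole argument rests on one observation: Z_1 solves the characteristic
   equation Z_1' = - Wbar(Z_1).  Writing tau = Z_1^{-1}(X) and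
   flux_Y(u) = Z_1'(u) / (Y + Z_1(u)), we have G(X, Y; T) = flux_Y(T + tau) / Z_1'(tau),
   hence Wbar(X) G(X, Y; T) = - flux_Y(T + tau(X)).  Differentiating in X with the
   inverse-function rule tau'(X) = 1 / Z_1'(tau) gives the transport equation, and
   G = (1 / Z_1'(tau)) d/dT ln (Y + Z_1(T + tau)) gives the integral over [0, +oo)
   because Z_1 -> alpha at infinity; the cap function is the limit of Y times it. *)

Lemma sinh_pos x : 0 < x -> 0 < sinh x.
Proof. intros Hx. rewrite <- sinh_0. now apply sinh_lt. Qed.

Lemma cosh_pos x : 0 < cosh x.
Proof. unfold cosh. generalize (exp_pos x) (exp_pos (- x)). lra. Qed.

Lemma cosh_sq x : cosh x ^ 2 = 1 + sinh x ^ 2.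
Proof.
  unfold cosh, sinh. rewrite exp_Ropp.
  generalize (exp_pos x). intros He. field. lra.
Qed.

Lemma sinh_lower x : 0 <= x -> x / 2 <= sinh x.
Proof.
  intros Hx. unfold sinh. rewrite exp_Ropp.
  assert (Hinv : / exp x <= 1).
  { rewrite <- Rinv_1. apply Rinv_le_contravar; [lra|].
    rewrite <- exp_0. destruct Hx as [Hx|<-]; [left; now apply exp_increasing | lra]. }
  generalize (exp_ineq1_le x). lra.
Qed.

Section ExplicitProfile.
Variables S a : R.
Hypotheses (HS : 0 < S) (Ha : 0 < a).

Definition profile_denom (t : R) : R :=
  sinh (S * t) * (S * cosh (S * t) + a * sinh (S * t)).

Definition profile_slope (t : R) : R :=
  S * (cosh (S * t) ^ 2 + sinh (S * t) ^ 2) + 2 * a * sinh (S * t) * cosh (S * t).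

Definition profile (t : R) : R := a + S ^ 2 / profile_denom t.

Definition profile_deriv (t : R) : R := - S ^ 3 * profile_slope t / profile_denom t ^ 2.

Lemma profile_denom_derive t : is_derive profile_denom t (S * profile_slope t).
Proof.
  unfold profile_denom, profile_slope, sinh, cosh. auto_derive; [easy|]. unfold Rdiv. ring.
Qed.

Lemma profile_slope_pos t : 0 < t -> 0 < profile_slope t.
Proof.
  intros Ht. unfold profile_slope.
  assert (Hs := sinh_pos (S * t) ltac:(nra)). assert (Hc := cosh_pos (S * t)).
  assert (0 < sinh (S * t) * cosh (S * t)) by nra. nra.
Qed.

Lemma profile_denom_increasing t1 t2 :
  0 <= t1 -> t1 < t2 -> profile_denom t1 < profile_denom t2.
Proof.
  intros H1 H12.
  destruct (MVT_cor2 profile_denom (fun t => S * profile_slope t) t1 t2 H12) as [c [Hc Hct]].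
  { intros c _. apply is_derive_Reals, profile_denom_derive. }
  assert (0 < S * profile_slope c * (t2 - t1)).
  { apply Rmult_lt_0_compat; [apply Rmult_lt_0_compat, profile_slope_pos|]; lra. }
  lra.
Qed.

Lemma profile_denom_pos t : 0 < t -> 0 < profile_denom t.
Proof.
  intros Ht.
  assert (H0 : profile_denom 0 = 0) by (unfold profile_denom; rewrite Rmult_0_r, sinh_0; ring).
  rewrite <- H0. apply profile_denom_increasing; lra.
Qed.

Lemma profile_denom_lower t : 0 <= t -> a * (S * t / 2) ^ 2 <= profile_denom t.
Proof.
  intros Ht. unfold profile_denom.
  assert (Hs := sinh_lower (S * t) ltac:(nra)). assert (Hc := cosh_pos (S * t)).
  assert ((S * t / 2) ^ 2 <= sinh (S * t) ^ 2) by (apply pow_incr; nra).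
  assert (0 <= S * sinh (S * t) * cosh (S * t)) by (apply Rmult_le_pos; nra).
  nra.
Qed.

Lemma profile_derive t : 0 < t -> is_derive profile t (profile_deriv t).
Proof.
  intros Ht. assert (HD := profile_denom_pos t Ht).
  unfold profile, profile_deriv.
  assert (Hquot := is_derive_scal _ _ (S ^ 2) _
    (is_derive_inv _ _ _ (profile_denom_derive t) ltac:(lra))).
  assert (Hsum := is_derive_plus (fun _ => a) _ _ _ _ (is_derive_const a t) Hquot).
  replace (- S ^ 3 * profile_slope t / profile_denom t ^ 2) with
    (plus 0 (S ^ 2 * (- (S * profile_slope t) / profile_denom t ^ 2)))
    by (unfold plus; simpl; field; lra).
  exact Hsum.
Qed.

Lemma profile_deriv_derivable t : 0 < t -> ex_derive profile_deriv t.
Proof.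
  intros Ht. assert (HD := profile_denom_pos t Ht).
  unfold profile_deriv, profile_slope. unfold profile_denom in *. unfold sinh, cosh in *.
  auto_derive. apply Rgt_not_eq. nra.
Qed.

(* The profile solves Z' = -(Z - a) sqrt((Z + a)^2 - (4a^2 - 4S^2)); the key identity is
   slope^2 = S^2 + 4 a denom + 4 denom^2, a consequence of cosh^2 = 1 + sinh^2. *)
Lemma profile_ode t : 0 < t ->
  profile_deriv t = - (profile t - a) * sqrt ((profile t + a) ^ 2 - (4 * a ^ 2 - 4 * S ^ 2)).
Proof.
  intros Ht. assert (HD := profile_denom_pos t Ht). assert (HE := profile_slope_pos t Ht).
  assert (Hid : profile_slope t ^ 2 = S ^ 2 + 4 * a * profile_denom t + 4 * profile_denom t ^ 2).
  { unfold profile_slope, profile_denom. assert (Hk := cosh_sq (S * t)).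
    set (s := sinh (S * t)) in *. set (c := cosh (S * t)) in *.
    transitivity (S ^ 2 + 4 * a * (s * (S * c + a * s)) + 4 * (s * (S * c + a * s)) ^ 2
      + (c ^ 2 - 1 - s ^ 2) * (S ^ 2 * (c ^ 2 - s ^ 2 + 1) + 4 * a * S * s * c + 4 * a ^ 2 * s ^ 2));
      [ring | rewrite Hk; ring]. }
  assert (Hsq : (profile t + a) ^ 2 - (4 * a ^ 2 - 4 * S ^ 2) = (S * profile_slope t / profile_denom t) ^ 2).
  { unfold profile. field_simplify; [|lra..]. rewrite Hid. field. lra. }
  rewrite Hsq, sqrt_pow2.
  - unfold profile_deriv, profile. field. lra.
  - apply Rlt_le, Rdiv_lt_0_compat; nra.
Qed.

Lemma profile_gt t : 0 < t -> a < profile t.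
Proof.
  intros Ht. unfold profile.
  assert (0 < S ^ 2 / profile_denom t) by (apply Rdiv_lt_0_compat; [nra | now apply profile_denom_pos]).
  lra.
Qed.

Lemma profile_decreasing t1 t2 : 0 < t1 -> t1 < t2 -> profile t2 < profile t1.
Proof.
  intros H1 H12. unfold profile.
  assert (HD1 := profile_denom_pos t1 H1).
  assert (HD12 := profile_denom_increasing t1 t2 ltac:(lra) H12).
  apply Rplus_lt_compat_l, Rmult_lt_compat_l; [nra|].
  apply Rinv_lt_contravar; nra.
Qed.

(* Quantitative decay of the profile towards a, from denom >= a (S t / 2)^2. *)
Lemma profile_decay t : 0 < t -> profile t - a <= 4 / (a * t ^ 2).
Proof.
  intros Ht. unfold profile.
  assert (HD := profile_denom_lower t ltac:(lra)).
  replace (4 / (a * t ^ 2)) with (S ^ 2 / (a * (S * t / 2) ^ 2)) by (field; lra).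
  replace (a + S ^ 2 / profile_denom t - a) with (S ^ 2 / profile_denom t) by ring.
  apply Rmult_le_compat_l; [nra|].
  apply Rinv_le_contravar; [|exact HD].
  apply Rmult_lt_0_compat; [lra | apply pow_lt; nra].
Qed.

Lemma profile_tends : lim_infty profile a.
Proof.
  intros eps He. exists (1 + 4 / (a * eps)). intros t Ht.
  assert (H4 : 0 < 4 / (a * eps)) by (apply Rdiv_lt_0_compat; nra).
  assert (Hgt := profile_gt t ltac:(lra)).
  assert (Hdecay := profile_decay t ltac:(lra)).
  assert (Hat : 4 < a * eps * t).
  { replace 4 with (4 / (a * eps) * (a * eps)) at 1 by (field; lra).
    rewrite (Rmult_comm (a * eps) t). apply Rmult_lt_compat_r; nra. }
  assert (Hsmall : 4 / (a * t ^ 2) < eps).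
  { apply (Rmult_lt_reg_r (a * t ^ 2)); [apply Rmult_lt_0_compat; [lra | apply pow_lt; lra]|].
    unfold Rdiv. rewrite Rmult_assoc, Rinv_l, Rmult_1_r by (apply Rgt_not_eq, Rmult_lt_0_compat; [lra | apply pow_lt; lra]).
    nra. }
  rewrite Rabs_right; lra.
Qed.

(* Every value above a is attained: solve denom t = S^2 / (X - a) by the intermediate value theorem. *)
Lemma profile_onto X : a < X -> exists t, 0 < t /\ profile t = X.
Proof.
  intros HX. set (w := S ^ 2 / (X - a)).
  assert (Hw : 0 < w) by (apply Rdiv_lt_0_compat; nra).
  set (T := 1 + 4 * w / (a * S ^ 2)).
  assert (HaS : 0 < a * S ^ 2) by (apply Rmult_lt_0_compat; [lra | apply pow_lt; lra]).
  assert (HT : 1 < T) by (unfold T; assert (0 < 4 * w / (a * S ^ 2)) by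
    (apply Rdiv_lt_0_compat; lra); lra).
  assert (Hbig : w < profile_denom T).
  { assert (HD := profile_denom_lower T ltac:(lra)).
    assert (Hsq : a * (S * T / 2) ^ 2 = a * S ^ 2 / 4 * (T * T)) by field.
    assert (HT1 : a * S ^ 2 / 4 * T = a * S ^ 2 / 4 + w) by (unfold T; field; lra).
    assert (0 < a * S ^ 2 / 4) by lra.
    nra. }
  destruct (IVT (fun t => profile_denom t - w) 0 T) as [z [Hz Hzw]].
  - intros x. apply derivable_continuous_pt.
    exists (S * profile_slope x - 0).
    apply (derivable_pt_lim_minus profile_denom (fct_cte w));
      [apply is_derive_Reals, profile_denom_derive | apply derivable_pt_lim_const].
  - lra.
  - unfold profile_denom. rewrite Rmult_0_r, sinh_0. lra.
  - lra.
  - assert (Hz0 : z <> 0) by (intros ->; unfold profile_denom in Hzw; rewrite Rmult_0_r, sinh_0 in Hzw; lra).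
    exists z. split; [lra|]. unfold profile.
    replace (profile_denom z) with w by lra. unfold w. field. lra.
Qed.
End ExplicitProfile.

Section DecreasingInverse.
Variables (f df g : R -> R) (a : R).
Hypotheses
  (f_derive : forall t, 0 < t -> derivable_pt_lim f t (df t))
  (f_decreasing : forall t1 t2, 0 < t1 -> t1 < t2 -> f t2 < f t1)
  (g_inverse : forall x, a < x -> 0 < g x /\ f (g x) = x).

Lemma inverse_decreasing x1 x2 : a < x1 -> x1 < x2 -> g x2 < g x1.
Proof.
  intros H1 H12.
  destruct (g_inverse x1 H1) as [Hg1 Hf1]. destruct (g_inverse x2 ltac:(lra)) as [Hg2 Hf2].
  destruct (Rtotal_order (g x2) (g x1)) as [Hlt|[Heq|Hgt]]; [easy| |].
  - rewrite Heq in Hf2. lra.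
  - generalize (f_decreasing _ _ Hg1 Hgt). lra.
Qed.

(* The reflection t |-> f (- t) is increasing on (-oo, 0), with inverse y |-> - g y;
   this brings the library theorem on inverses of increasing functions into play. *)
Let f_refl (t : R) : R := f (- t).
Let g_refl (y : R) : R := - g y.

Let f_refl_derive t : t < 0 -> derivable_pt_lim f_refl t (- df (- t)).
Proof.
  intros Ht. replace (- df (- t)) with (df (- t) * -1) by ring.
  apply (derivable_pt_lim_comp (fun s => - s) f).
  - apply (derivable_pt_lim_opp id), derivable_pt_lim_id.
  - apply f_derive. lra.
Qed.

Let inverse_nonincreasing y1 y2 : a < y1 -> y1 <= y2 -> g y2 <= g y1.
Proof. intros H1 [H12|<-]; [left; now apply inverse_decreasing | lra]. Qed.

Let refl_inverse y : a < y -> comp f_refl g_refl y = id y.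
Proof. intros Hy. unfold comp, f_refl, g_refl, id. rewrite Ropp_involutive. apply g_inverse, Hy. Qed.

Let g_refl_continuous x : a < x -> continuity_pt g_refl x.
Proof.
  intros Hx. set (x1 := (a + x) / 2). set (x2 := x + 1).
  assert (Hg2 : 0 < g x2) by (apply g_inverse; unfold x2; lra).
  assert (Hlt : g x2 < g x1) by (apply inverse_decreasing; unfold x1, x2; lra).
  apply (continuity_pt_recip_interv f_refl g_refl (g_refl x1) (g_refl x2));
    unfold f_refl, g_refl in *; rewrite ?Ropp_involutive,
      ?(proj2 (g_inverse x1 ltac:(unfold x1; lra))), ?(proj2 (g_inverse x2 ltac:(unfold x2; lra))).
  - lra.
  - intros s t Hs Hst Ht. apply f_decreasing; lra.
  - intros y Hy1 Hy2. apply refl_inverse. unfold x1 in Hy1. lra.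
  - intros y Hy1 Hy2. split; apply Ropp_le_contravar, inverse_nonincreasing; unfold x1 in *; lra.
  - intros t Ht. apply derivable_continuous_pt. exists (- df (- t)). apply f_refl_derive. lra.
  - unfold x1, x2. lra.
Qed.

Lemma inverse_derive x : a < x -> df (g x) <> 0 -> derivable_pt_lim g x (/ df (g x)).
Proof.
  intros Hx Hdf. set (x1 := (a + x) / 2). set (x2 := x + 1).
  assert (Hg2 : 0 < g x2) by (apply g_inverse; unfold x2; lra).
  assert (Hrange : g_refl x1 <= g_refl x <= g_refl x2).
  { unfold g_refl. split; apply Ropp_le_contravar, inverse_nonincreasing; unfold x1, x2; lra. }
  assert (Prf : forall t, g_refl x1 <= t <= g_refl x2 -> derivable_pt f_refl t).
  { intros t Ht. exists (- df (- t)). apply f_refl_derive. unfold g_refl in Ht. lra. }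
  assert (Hder : derive_pt f_refl (g_refl x) (Prf _ Hrange) = - df (g x)).
  { apply derive_pt_eq_0. unfold g_refl. rewrite <- (Ropp_involutive (g x)) at 2.
    apply f_refl_derive. generalize (proj1 (g_inverse x Hx)). lra. }
  assert (Hrefl := derivable_pt_lim_recip_interv f_refl g_refl x1 x2 x Prf (g_refl_continuous x Hx)
    ltac:(unfold x1, x2; lra) ltac:(unfold x1, x2; lra) Hrange
    ltac:(intros y Hy; apply refl_inverse; unfold x1 in Hy; lra) ltac:(rewrite Hder; lra)).
  rewrite Hder in Hrefl. apply (derivable_pt_lim_opp g_refl) in Hrefl.
  replace (/ df (g x)) with (- (1 / - df (g x))) by (field; exact Hdf).
  apply is_derive_Reals. apply is_derive_Reals in Hrefl. revert Hrefl.
  apply is_derive_ext. intros y. unfold opp_fct, g_refl. apply Ropp_involutive.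
Qed.
End DecreasingInverse.
Lemma derivable_pt_lim_ext_loc f g x l r : 0 < r ->
  (forall t, Rabs (t - x) < r -> f t = g t) ->
  derivable_pt_lim f x l -> derivable_pt_lim g x l.
Proof.
  intros Hr Hfg Hf. apply is_derive_Reals. apply is_derive_Reals in Hf.
  apply (is_derive_ext_loc f); [|exact Hf].
  exists (mkposreal r Hr). intros t Ht. apply Hfg, Ht.
Qed.

Lemma lim_infty_shift h l c : lim_infty h l -> lim_infty (fun t => h (t + c)) l.
Proof.
  intros Hh eps He. destruct (Hh eps He) as [M HM].
  exists (M - c). intros t Ht. apply HM. lra.
Qed.

Lemma lim_infty_scal h k c l :
  (forall Y, k Y = c * h Y) -> lim_infty h l -> lim_infty k (c * l).
Proof.
  intros Hk Hh eps He.
  destruct (Hh (eps / (Rabs c + 1))) as [M HM].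
  { apply Rdiv_lt_0_compat; generalize (Rabs_pos c); lra. }
  exists M. intros Y HY. rewrite Hk, <- Rmult_minus_distr_l, Rabs_mult.
  apply Rle_lt_trans with (Rabs c * (eps / (Rabs c + 1))).
  - apply Rmult_le_compat_l; [apply Rabs_pos | left; now apply HM].
  - apply (Rmult_lt_reg_r (Rabs c + 1)); [generalize (Rabs_pos c); lra|].
    field_simplify; generalize (Rabs_pos c); nra.
Qed.

Lemma lim_infty_continuous h k l :
  lim_infty h l -> continuity_pt k l -> lim_infty (fun t => k (h t)) (k l).
Proof.
  intros Hh Hk eps He.
  destruct (Hk eps He) as [delta [Hdelta Hnear]].
  destruct (Hh delta Hdelta) as [M HM].
  exists M. intros t Ht.
  destruct (Req_dec l (h t)) as [<-|Hne].
  - unfold Rminus. rewrite Rplus_opp_r, Rabs_R0. exact He.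
  - apply (Hnear (h t)). split; [split; [easy | exact Hne] | apply (HM t Ht)].
Qed.

Lemma improper_int_antiderivative (G P : R -> R) L :
  (forall t, 0 <= t -> derivable_pt_lim P t (G t)) ->
  (forall t, 0 <= t -> continuity_pt G t) ->
  lim_infty P L -> improper_int_0_infty G (L - P 0).
Proof.
  intros HP HG HL.
  assert (Hftc : forall b (pr : Riemann_integrable G 0 b), 0 <= b -> RiemannInt pr = P b - P 0).
  { intros b pr Hb. rewrite <- (RInt_Reals G 0 b pr). apply is_RInt_unique.
    apply (is_RInt_derive P G); rewrite Rmin_left, Rmax_right by lra; intros x Hx.
    - apply is_derive_Reals, HP. lra.
    - apply continuity_pt_filterlim, HG. lra. }
  split.
  - intros b Hb. exists (@continuity_implies_RiemannInt G 0 b Hb (fun x Hx => HG x (proj1 Hx))). easy.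
  - intros eps He. destruct (HL eps He) as [M HM].
    exists (Rmax (M + 1) 0). intros b pr Hb.
    assert (Hb1 := Rle_trans _ _ _ (Rmax_l (M + 1) 0) Hb).
    assert (Hb0 := Rle_trans _ _ _ (Rmax_r (M + 1) 0) Hb).
    rewrite Hftc by exact Hb0.
    replace (P b - P 0 - (L - P 0)) with (P b - L) by ring. apply HM. lra.
Qed.

Lemma ln_increment_bounds p q : 0 < p -> p <= q -> (q - p) / q <= ln q - ln p <= (q - p) / p.
Proof.
  intros Hp Hpq.
  assert (Hln : forall z, 0 < z -> ln z <= z - 1)
    by (intros z Hz; generalize (exp_ineq1_le (ln z)); rewrite exp_ln; lra).
  split.
  - generalize (Hln (p / q) ltac:(apply Rdiv_lt_0_compat; lra)).
    rewrite ln_div by lra. replace ((q - p) / q) with (- (p / q - 1)) by (field; lra). lra.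
  - generalize (Hln (q / p) ltac:(apply Rdiv_lt_0_compat; lra)).
    rewrite ln_div by lra. replace ((q - p) / p) with (q / p - 1) by (field; lra). lra.
Qed.

(* Y (ln (Y + a) - ln (Y + X)) -> a - X as Y -> +oo; the error is at most (X - a) X / (Y + X). *)
Lemma log_gap_limit a X : 0 < a -> a < X -> lim_infty (fun Y => Y * (ln (Y + a) - ln (Y + X))) (a - X).
Proof.
  intros Ha HX eps He.
  exists ((X - a) * X / eps). intros Y HY.
  assert (HY0 : 0 < Y) by (apply Rlt_trans with ((X - a) * X / eps); [apply Rdiv_lt_0_compat; nra | exact HY]).
  destruct (ln_increment_bounds (Y + a) (Y + X)) as [Hlow Hup]; [lra | lra |].
  set (L := ln (Y + X) - ln (Y + a)) in *.
  replace (Y * (ln (Y + a) - ln (Y + X)) - (a - X)) with ((X - a) - Y * L) by (unfold L; ring).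
  assert (Hle : Y * L <= X - a).
  { apply Rle_trans with (Y * ((Y + X - (Y + a)) / (Y + a))); [apply Rmult_le_compat_l; lra|].
    apply (Rmult_le_reg_r (Y + a)); [lra|]. field_simplify; nra. }
  assert (Hge : (X - a) - Y * L <= (X - a) * X / (Y + X)).
  { apply Rle_trans with ((X - a) - Y * ((Y + X - (Y + a)) / (Y + X))); [apply Rplus_le_compat_l, Ropp_le_contravar, Rmult_le_compat_l; lra|].
    right. field. lra. }
  rewrite Rabs_right by lra.
  apply Rle_lt_trans with ((X - a) * X / (Y + X)); [exact Hge|].
  apply (Rmult_lt_reg_r (Y + X)); [lra|]. unfold Rdiv at 1. rewrite Rmult_assoc, Rinv_l, Rmult_1_r by lra.
  assert ((X - a) * X < eps * Y).
  { apply (Rmult_lt_reg_r (/ eps)); [apply Rinv_0_lt_compat; lra|].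
    replace (eps * Y * / eps) with Y by (field; lra). unfold Rdiv in HY. lra. }
  nra.
Qed.

Section CDTPropagator.
Variables (gs alpha : R) (dZ1 : R -> R).
Hypotheses
  (Halpha : 0 < alpha) (Hineq : gs < 2 * alpha ^ 3)
  (HdZ1 : forall T, 0 < T -> derivable_pt_lim (Z1 gs alpha) T (dZ1 T)).

Lemma discriminant_pos : 0 < 4 * alpha ^ 2 - 2 * gs / alpha.
Proof.
  assert (gs / alpha < 2 * alpha ^ 2).
  { apply (Rmult_lt_reg_r alpha); [lra|]. unfold Rdiv.
    rewrite Rmult_assoc, Rinv_l by lra. nra. }
  unfold Rdiv in *. lra.
Qed.

Lemma Sigma_pos : 0 < Sigma gs alpha.
Proof.
  unfold Sigma. apply Rmult_lt_0_compat; [lra|]. apply sqrt_lt_R0, discriminant_pos.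
Qed.

Lemma Sigma_sq : 2 * gs / alpha = 4 * alpha ^ 2 - 4 * Sigma gs alpha ^ 2.
Proof.
  unfold Sigma. rewrite Rpow_mult_distr, pow2_sqrt by apply Rlt_le, discriminant_pos.
  field. lra.
Qed.

(* Z_1 is the explicit profile with S = Sigma, a = alpha; hence dZ1 is its derivative. *)
Lemma dZ1_profile t : 0 < t -> dZ1 t = profile_deriv (Sigma gs alpha) alpha t.
Proof.
  intros Ht. apply (uniqueness_limite (Z1 gs alpha) t); [now apply HdZ1|].
  apply is_derive_Reals, (profile_derive _ _ Sigma_pos Halpha t Ht).
Qed.

Lemma dZ1_ode t : 0 < t -> dZ1 t = - Wbar gs alpha (Z1 gs alpha t).
Proof.
  intros Ht. rewrite dZ1_profile, (profile_ode _ _ Sigma_pos Halpha t Ht) by exact Ht.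
  unfold Wbar. rewrite Sigma_sq. change (profile _ _ t) with (Z1 gs alpha t). ring.
Qed.

Lemma Wbar_pos x : alpha < x -> 0 < Wbar gs alpha x.
Proof.
  intros Hx. unfold Wbar. apply Rmult_lt_0_compat; [lra|].
  apply sqrt_lt_R0. rewrite Sigma_sq. generalize Sigma_pos. nra.
Qed.

Lemma Z1inv_spec x : alpha < x -> 0 < Z1inv gs alpha x /\ Z1 gs alpha (Z1inv gs alpha x) = x.
Proof.
  intros Hx. unfold Z1inv. apply epsilon_spec.
  exact (profile_onto _ _ Sigma_pos Halpha x Hx).
Qed.

Lemma dZ1_at_inverse x : alpha < x -> dZ1 (Z1inv gs alpha x) = - Wbar gs alpha x.
Proof.
  intros Hx. destruct (Z1inv_spec x Hx) as [Hpos Hval].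
  rewrite dZ1_ode by exact Hpos. now rewrite Hval.
Qed.

Lemma Z1inv_derive x : alpha < x ->
  derivable_pt_lim (Z1inv gs alpha) x (/ dZ1 (Z1inv gs alpha x)).
Proof.
  intros Hx. apply (inverse_derive (Z1 gs alpha) dZ1 (Z1inv gs alpha) alpha HdZ1).
  - exact (profile_decreasing _ _ Sigma_pos Halpha).
  - exact Z1inv_spec.
  - exact Hx.
  - rewrite dZ1_at_inverse by exact Hx. generalize (Wbar_pos x Hx). lra.
Qed.

Definition flux (Y u : R) : R := dZ1 u / (Y + Z1 gs alpha u).

Lemma flux_derivable Y u : 0 < Y -> 0 < u -> ex_derive (flux Y) u.
Proof.
  intros HY Hu. unfold flux. apply ex_derive_div.
  - apply (ex_derive_ext_loc (profile_deriv (Sigma gs alpha) alpha)).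
    + exists (mkposreal u Hu). intros t Ht. symmetry. apply dZ1_profile.
      change (Rabs (t - u) < u) in Ht. apply Rabs_def2 in Ht. lra.
    + exact (profile_deriv_derivable _ _ Sigma_pos Halpha u Hu).
  - exists (0 + dZ1 u). apply is_derive_Reals.
    exact (derivable_pt_lim_plus (fct_cte Y) _ u _ _ (derivable_pt_lim_const Y u) (HdZ1 u Hu)).
  - generalize (profile_gt _ _ Sigma_pos Halpha u Hu). change (profile _ _ u) with (Z1 gs alpha u). lra.
Qed.

Lemma Gprop_flux X Y T :
  Gprop gs alpha dZ1 X Y T = / dZ1 (Z1inv gs alpha X) * flux Y (T + Z1inv gs alpha X).
Proof. unfold Gprop, Z1X, flux, Rdiv. ring. Qed.

Lemma Wbar_Gprop x Y T : alpha < x ->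
  Wbar gs alpha x * Gprop gs alpha dZ1 x Y T = - flux Y (T + Z1inv gs alpha x).
Proof.
  intros Hx. rewrite Gprop_flux, dZ1_at_inverse by exact Hx.
  generalize (Wbar_pos x Hx). intros HW. field. lra.
Qed.

Lemma Gprop_initial X Y : alpha < X -> 0 < Y -> Gprop gs alpha dZ1 X Y 0 = / (X + Y).
Proof.
  intros HX HY. destruct (Z1inv_spec X HX) as [_ Hval].
  unfold Gprop, Z1X. rewrite Rplus_0_l, Hval, dZ1_at_inverse by exact HX.
  generalize (Wbar_pos X HX). intros HW. field. lra.
Qed.

Lemma Gprop_time_derive X Y T l : alpha < X -> 0 <= T ->
  derivable_pt_lim (flux Y) (T + Z1inv gs alpha X) l ->
  derivable_pt_lim (fun t => Gprop gs alpha dZ1 X Y t) T (/ dZ1 (Z1inv gs alpha X) * l).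
Proof.
  intros HX HT Hl. set (tau := Z1inv gs alpha X).
  apply (derivable_pt_lim_ext_loc (fun t => / dZ1 tau * flux Y (t + tau)) _ _ _ 1 Rlt_0_1).
  { intros t _. symmetry. apply Gprop_flux. }
  apply (derivable_pt_lim_scal (fun t => flux Y (t + tau))).
  replace l with (l * (1 + 0)) by ring.
  apply (derivable_pt_lim_comp (fun t => t + tau) (flux Y)); [|exact Hl].
  apply (derivable_pt_lim_plus id (fct_cte tau)); [apply derivable_pt_lim_id | apply derivable_pt_lim_const].
Qed.

Lemma Gprop_transport X Y T : alpha < X -> 0 < Y -> 0 < T ->
  exists d,
    derivable_pt_lim (fun x => Wbar gs alpha x * Gprop gs alpha dZ1 x Y T) X d /\
    derivable_pt_lim (fun t => Gprop gs alpha dZ1 X Y t) T (- d).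
Proof.
  intros HX HY HT. set (tau := Z1inv gs alpha X).
  assert (Htau : 0 < tau) by exact (proj1 (Z1inv_spec X HX)).
  destruct (flux_derivable Y (T + tau) HY ltac:(lra)) as [l Hl].
  apply is_derive_Reals in Hl.
  exists (- (l * / dZ1 tau)). split.
  - apply (derivable_pt_lim_ext_loc (fun x => - flux Y (T + Z1inv gs alpha x)) _ _ _ (X - alpha));
      [lra | intros x Hx; symmetry; apply Wbar_Gprop; apply Rabs_def2 in Hx; lra |].
    apply (derivable_pt_lim_opp (fun x => flux Y (T + Z1inv gs alpha x))).
    apply (derivable_pt_lim_comp (fun x => T + Z1inv gs alpha x) (flux Y)); [|exact Hl].
    replace (/ dZ1 tau) with (0 + / dZ1 tau) by ring.
    apply (derivable_pt_lim_plus (fct_cte T)); [apply derivable_pt_lim_const | now apply Z1inv_derive].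
  - replace (- - (l * / dZ1 tau)) with (/ dZ1 tau * l) by ring.
    apply Gprop_time_derive; [exact HX | lra | exact Hl].
Qed.

Definition cap_integral (X Y : R) : R :=
  / dZ1 (Z1inv gs alpha X) * (ln (Y + alpha) - ln (Y + X)).

(* G(X, Y; .) = (1 / Z_1'(tau)) d/dT ln (Y + Z_1(T + tau)) and Z_1 -> alpha at infinity. *)
Lemma Gprop_integral X Y : alpha < X -> 0 < Y ->
  improper_int_0_infty (fun T => Gprop gs alpha dZ1 X Y T) (cap_integral X Y).
Proof.
  intros HX HY. set (tau := Z1inv gs alpha X).
  destruct (Z1inv_spec X HX) as [Htau Hval]. fold tau in Htau, Hval.
  set (P := fun t => / dZ1 tau * ln (Y + Z1 gs alpha (t + tau))).
  assert (HZ : forall u, 0 < u -> alpha < Z1 gs alpha u) by exact (profile_gt _ _ Sigma_pos Halpha).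
  replace (cap_integral X Y) with (/ dZ1 tau * ln (Y + alpha) - P 0)
    by (unfold cap_integral, P; rewrite Rplus_0_l, Hval; fold tau; ring).
  apply improper_int_antiderivative.
  - intros t Ht. unfold P.
    replace (Gprop gs alpha dZ1 X Y t) with
      (/ dZ1 tau * (/ (Y + Z1 gs alpha (t + tau)) * (0 + dZ1 (t + tau) * (1 + 0))))
      by (rewrite Gprop_flux; unfold flux, Rdiv; fold tau; ring).
    apply (derivable_pt_lim_scal (fun t => ln (Y + Z1 gs alpha (t + tau)))).
    apply (derivable_pt_lim_comp (fun t => Y + Z1 gs alpha (t + tau)) ln);
      [| apply derivable_pt_lim_ln; generalize (HZ (t + tau) ltac:(lra)); lra].
    apply (derivable_pt_lim_plus (fct_cte Y)); [apply derivable_pt_lim_const|].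
    apply (derivable_pt_lim_comp (fun t => t + tau) (Z1 gs alpha)); [|apply HdZ1; lra].
    apply (derivable_pt_lim_plus id (fct_cte tau)); [apply derivable_pt_lim_id | apply derivable_pt_lim_const].
  - intros t Ht. destruct (flux_derivable Y (t + tau) HY ltac:(lra)) as [l Hl].
    apply derivable_continuous_pt. exists (/ dZ1 tau * l).
    apply Gprop_time_derive; [exact HX | exact Ht | now apply is_derive_Reals].
  - apply (lim_infty_continuous (fun t => Z1 gs alpha (t + tau)) (fun z => / dZ1 tau * ln (Y + z))).
    + apply lim_infty_shift, (profile_tends _ _ Sigma_pos Halpha).
    + apply continuity_pt_filterlim.
      apply (ex_derive_continuous (fun z => / dZ1 tau * ln (Y + z))). auto_derive. lra.
Qed.

Lemma cap_limit X : alpha < X ->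
  lim_infty (fun Y => Y * cap_integral X Y) ((alpha - X) / dZ1 (Z1inv gs alpha X)).
Proof.
  intros HX. unfold Rdiv. rewrite Rmult_comm.
  apply (lim_infty_scal (fun Y => Y * (ln (Y + alpha) - ln (Y + X)))).
  - intros Y. unfold cap_integral. ring.
  - now apply log_gap_limit.
Qed.

Lemma cap_value X : alpha < X ->
  (alpha - X) / dZ1 (Z1inv gs alpha X) = / sqrt ((X + alpha) ^ 2 - 2 * gs / alpha).
Proof.
  intros HX. rewrite dZ1_at_inverse by exact HX.
  assert (HW := Wbar_pos X HX). unfold Wbar in *.
  assert (0 < sqrt ((X + alpha) ^ 2 - 2 * gs / alpha)) by (apply Rmult_lt_reg_l with (X - alpha); lra).
  field. lra.
Qed.
End CDTPropagator.

Theorem mainTheorem10 (lam gs alpha : R) (dZ1 : R -> R)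
  (Hlam : 0 < lam) (Hgs : 0 < gs) (Halpha : 0 < alpha)
  (Hroot : alpha ^ 3 - lam * alpha + gs = 0)
  (Hineq : gs < 2 * alpha ^ 3)
  (HdZ1 : forall T, 0 < T -> derivable_pt_lim (Z1 gs alpha) T (dZ1 T)) :
  forall X, alpha < X ->
    (forall Y, 0 < Y -> Gprop gs alpha dZ1 X Y 0 = / (X + Y)) /\
    (forall Y T, 0 < Y -> 0 < T ->
       exists d,
         derivable_pt_lim (fun x => Wbar gs alpha x * Gprop gs alpha dZ1 x Y T) X d /\
         derivable_pt_lim (fun t => Gprop gs alpha dZ1 X Y t) T (- d)) /\
    (exists I : R -> R,
       (forall Y, 0 < Y -> improper_int_0_infty (fun T => Gprop gs alpha dZ1 X Y T) (I Y)) /\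
       lim_infty (fun Y => Y * I Y) ((alpha - X) / dZ1 (Z1inv gs alpha X)) /\
       (alpha - X) / dZ1 (Z1inv gs alpha X) = / sqrt ((X + alpha) ^ 2 - 2 * gs / alpha)).
Proof.
  intros X HX. split; [|split].
  - intros Y HY. now apply Gprop_initial.
  - intros Y T HY HT. now apply Gprop_transport.
  - exists (cap_integral gs alpha dZ1 X). split; [|split].
    + intros Y HY. now apply Gprop_integral.
    + now apply cap_limit.
    + now apply cap_value.
Qed.
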